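(* Let $k\ge 2$, let $G$ be a finite simple graph, and let $u,v\in V(G)$ satisfy $N(u)=N(v)$. Then in every closed neighborhood balanced $k$-coloring $c$ of $G$, $c(u)=c(v)$.
   Context: $N(v)=\{u : uv\in E(G)\}$ and $N[v]=N(v)\cup\{v\}$. A closed neighborhood balanced $k$-coloring of $G$ is a map $c: V(G)\to\{1,\dots,k\}$ such that for every vertex $v$ the numbers $|\{u\in N[v] : c(u)=i\}|$, $i=1,\dots,k$, are all equal. *)

From mathcomp Require Import all_boot.
Set Implicit Arguments. Unset Strict Implicit. Unset Printing Implicit Defensive.

Definition simple_graph (V : finType) (adj : rel V) : Prop :=
  symmetric adj /\ irreflexive adj.

Definition nbhd (V : finType) (adj : rel V) (v : V) : {set V} :=
  [set u | adj u v].
Definition cnbhd (V : finType) (adj : rel V) (v : V) : {set V} :=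
  v |: nbhd adj v.

(* closed neighborhood balanced k-coloring, colours 1..k encoded as 'I_k *)
Definition cnb_coloring (V : finType) (adj : rel V) (k : nat) (c : V -> 'I_k) : Prop :=
  forall (v : V) (i j : 'I_k),
    #|[set u in cnbhd adj v | c u == i]| = #|[set u in cnbhd adj v | c u == j]|.

From mathcomp Require Import all_boot.
From Stdlib Require Import Lia.
From mathcomp Require Import zify.

(* Since N(u) = N(v), the colour counts of N[u] and N[v] differ only through
   u and v themselves.  Comparing the colours c u and c v, balance at u gives
   1 - [c u = c v] + d = 0 and balance at v gives [c u = c v] - 1 + d = 0 for
   the same d, so [c u = c v] = 1. *)

Lemma card_cnbhd_colour (V : finType) (T : eqType) (adj : rel V) (c : V -> T)
    (w : V) (i : T) :
  irreflexive adj ->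
  #|[set x in cnbhd adj w | c x == i]| =
  (c w == i) + #|[set x in nbhd adj w | c x == i]|.
Proof.
move=> irr.
have -> : [set x in cnbhd adj w | c x == i] =
    [set x in [set w] | c x == i] :|: [set x in nbhd adj w | c x == i].
  by apply/setP=> x; rewrite !inE andb_orl.
rewrite cardsU.
have -> : [set x in [set w] | c x == i] :&:
    [set x in nbhd adj w | c x == i] = set0.
  by apply/setP=> x; rewrite !inE; case: eqP => // ->; rewrite irr !andbF.
have -> : [set x in [set w] | c x == i] = if c w == i then [set w] else set0.
  by apply/setP=> x; case: ifP => ci; rewrite !inE; case: eqP => // ->.
by case: (c w == i); rewrite ?cards1 ?cards0 subn0.
Qed.

Theorem mainTheorem18 (k : nat) (V : finType) (adj : rel V) (u v : V)
  (c : V -> 'I_k) :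
  2 <= k -> simple_graph adj -> nbhd adj u = nbhd adj v ->
  cnb_coloring adj c -> c u = c v.
Proof.
move=> _ [_ irr] same_nbhd balanced.
have at_u := balanced u (c u) (c v).
have at_v := balanced v (c u) (c v).
rewrite !card_cnbhd_colour // same_nbhd eqxx in at_u.
rewrite !card_cnbhd_colour // eqxx [c v == c u]eq_sym in at_v.
by apply/eqP; move: at_u at_v; case: (c u == c v) => /=; lia.
Qed.
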